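(* Let $\underline A=(A_1,\dots,A_m)\in\mathcal C_k(d)$ with $\Theta_k(\underline A)>0$. For $1\le i\le m$ let $R_i:=\mathrm{Range}(A_i)$, let $M_i$ be a real $d\times k$ matrix with $M_i^tM_i=I_k$ and $\mathrm{Range}(M_i)=R_i$, and let $C_{i,j}:=M_i^tA_iM_j\in\mathrm{GL}(k,\mathbb R)$. Define $F:X\times\mathbb R^d\to X\times\mathbb R^d$, $F(\omega,v)=(\sigma\omega,A_{\omega_0}v)$; $\tilde F:X\times\mathbb R^k\to X\times\mathbb R^k$, $\tilde F(\omega,v)=(\sigma\omega,\mathbf C(\omega)v)$ with $\mathbf C(\omega):=C_{\omega_1,\omega_0}$; and $H:X\times\mathbb R^k\to X\times\mathbb R^d$, $H(\omega,v)=(\sigma\omega,M_{\omega_0}v)$. Then $F\circ H=H\circ\tilde F$, and $L_i(F)=L_i(\tilde F)$ for $i=1,\dots,k$.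
   Context: Fix integers $m,d\ge1$, $1\le k\le d$, and a probability vector $\underline p=(p_1,\dots,p_m)$ with all $p_j>0$. Let $X=\{1,\dots,m\}^{\mathbb N}$ with the Bernoulli product measure $\mathbf p=\underline p^{\mathbb N}$ and the left shift $\sigma$. $\mathcal C_k(d)$ is the set of tuples $\underline A=(A_1,\dots,A_m)\in{\rm Mat}(d,\mathbb R)^m$ with $\mathrm{rank}(A_j)=k$ for all $j$, and $\Theta_k(\underline A):=\min\{\|\wedge_k(A_aA_b)\|:1\le a,b\le m\}$ with $\wedge_k$ the $k$-th exterior power (matrix of $k\times k$ minors). For a linear cocycle $G(\omega,v)=(\sigma\omega,\mathbf D(\omega)v)$ on $X\times\mathbb R^N$ with iterates $\mathbf D^n(\omega)=\mathbf D(\sigma^{n-1}\omega)\cdots\mathbf D(\omega)$, its $i$-th Lyapunov exponent $L_i(G)\in[-\infty,\infty)$ is the $\mathbf p$-a.s. constant limit $\lim_n\frac1n\log s_i(\mathbf D^n(\omega))$, $s_1\ge s_2\ge\dots$ being singular values. *)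

From HB Require Import structures.
From mathcomp Require Import all_boot all_order all_algebra.
From mathcomp Require Import all_classical all_reals all_analysis.
From mathcomp Require Import polyrcf.
Set Implicit Arguments. Unset Strict Implicit. Unset Printing Implicit Defensive.
Import Order.TTheory GRing.Theory Num.Theory.
Import numFieldNormedType.Exports.
Local Open Scope classical_set_scope.
Local Open Scope ring_scope.

(* Symbol space X = {1,...,M}^N, with M := m.+1 >= 1 symbols 'I_m.+1 *)
Definition seqspace (m : nat) := nat -> 'I_m.+1.

HB.instance Definition _ m := gen_eqMixin (seqspace m).
HB.instance Definition _ m := gen_choiceMixin (seqspace m).
HB.instance Definition _ m := isPointed.Build (seqspace m) (fun _ => ord0).

Definition left_shift (m : nat) (w : seqspace m) : seqspace m := fun n => w n.+1.

Definition cylinder (m n : nat) (a : n.-tuple 'I_m.+1) : set (seqspace m) :=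
  [set w | forall j : 'I_n, w j = tnth a j].

Definition cylinders (m : nat) : set (set (seqspace m)) :=
  [set C | exists n (a : n.-tuple 'I_m.+1), C = cylinder a].

Definition Xm (m : nat) := g_sigma_algebraType (@cylinders m).

Definition positive_prob_vector (R : realType) (m : nat) (p : 'I_m.+1 -> R) :=
  (forall j, 0 < p j) /\ \sum_j p j = 1.

Definition is_bernoulli (R : realType) (m : nat) (p : 'I_m.+1 -> R)
  (P : probability (Xm m) R) :=
  forall n (a : n.-tuple 'I_m.+1),
    P (cylinder a) = (\prod_(j < n) p (tnth a j))%:E.

Definition real_eigenvalues (R : realType) (N : nat) (B : 'M[R]_N) : seq R :=
  let P := char_poly B in
  sort (fun x y => y <= x) (flatten [seq nseq (mup x P) x | x <- rootsR P]).

(* i-th singular value (1-based) : square root of the i-th largest eigenvalue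
   of A^T A *)
Definition singval (R : realType) (N : nat) (A : 'M[R]_N) (i : nat) : R :=
  Num.sqrt (nth 0 (real_eigenvalues (A^T *m A)) i.-1).

Definition elog (R : realType) (x : R) : \bar R :=
  if x == 0 then -oo%E else (ln x)%:E.

Definition cocycle (R : realType) (m N : nat) (D : seqspace m -> 'M[R]_N)
  : seqspace m * 'cV[R]_N -> seqspace m * 'cV[R]_N :=
  fun pr => (left_shift pr.1, D pr.1 *m pr.2).

Fixpoint cocycle_iter (R : realType) (m N : nat) (D : seqspace m -> 'M[R]_N)
  (n : nat) (w : seqspace m) : 'M[R]_N :=
  match n with
  | 0 => 1%:M
  | n'.+1 => D (iter n' (@left_shift m) w) *m cocycle_iter D n' w
  end.

Definition lyapunov_exponent (R : realType) (m N : nat)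
  (P : probability (Xm m) R) (D : seqspace m -> 'M[R]_N) (i : nat)
  (l : \bar R) : Prop :=
  {ae P, forall w : Xm m,
     (fun n : nat => ((n%:R)^-1)%:E * elog (singval (cocycle_iter D n w) i))%E
       @ \oo --> l}.

Definition incr_map (k d : nat) (f : {ffun 'I_k -> 'I_d}) : bool :=
  [forall i : 'I_k, forall j : 'I_k, (i < j)%N ==> (f i < f j)%N].

(* Euclidean (Frobenius) norm of wedge_k B, the matrix of k x k minors of B,
   indexed by increasing k-tuples of row/column indices *)
Definition wedge_norm (R : realType) (k d : nat) (B : 'M[R]_d) : R :=
  Num.sqrt (\sum_(f : {ffun 'I_k -> 'I_d} | incr_map f)
             \sum_(g : {ffun 'I_k -> 'I_d} | incr_map g)
                (\det (mxsub f g B)) ^+ 2).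

Definition Theta (R : realType) (m k d : nat) (A : 'I_m.+1 -> 'M[R]_d) : \bar R :=
  \big[Order.min/+oo%E]_(a : 'I_m.+1) \big[Order.min/+oo%E]_(b : 'I_m.+1)
     (wedge_norm k (A a *m A b))%:E.

(* The orthogonal projection M_j M_j^T fixes Range(A_j), so the two cocycles
   differ only at their ends: D_A^(n+1)(w) = M_(w_n) D_C^n(w) Y_(w_0) with
   Y_j = M_j^T A_j, which also gives F o H = H o F~.  The isometry M_(w_n) does
   not change singular values, and Y_(w_0) is onto R^k with a right inverse Z,
   so by Courant-Fischer the i-th singular values (i <= k) of D_C^n(w) Y_(w_0)
   and of D_C^n(w) agree up to factors depending only on Y_(w_0) and Z.  Thus
   log s_i(D_A^(n+1)(w)) - log s_i(D_C^n(w)) stays bounded for every w, and the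
   normalised sequences have the same limit. *)

From mathcomp Require Import all_boot all_order all_algebra.
From mathcomp Require Import all_classical all_reals all_analysis.
From mathcomp Require Import polyrcf complex zify.
From mathcomp.algebra_tactics Require Import ring lra.
Import Order.TTheory GRing.Theory Num.Theory.
Import numFieldNormedType.Exports.
Set Implicit Arguments. Unset Strict Implicit. Unset Printing Implicit Defensive.
Local Open Scope classical_set_scope.
Local Open Scope ring_scope.

Lemma char_poly_conjmx (F : fieldType) n (P A : 'M[F]_n) : P \in unitmx ->
  char_poly (invmx P *m A *m P) = char_poly A.
Proof.
move=> Pu; rewrite /char_poly /char_poly_mx.
set P' := map_mx polyC P.
have P'u : P' \in unitmx by rewrite map_unitmx.
rewrite !map_mxM map_invmx -/P'.
have X : 'X%:M = invmx P' *m 'X%:M *m P' :> 'M[{poly F}]_n.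
  by rewrite -mulmxA -scalar_mxC mulmxA mulVmx // mul1mx.
by rewrite {1}X -mulmxBl -mulmxBr !det_mulmx det_inv mulrC mulrA divrr ?mul1r.
Qed.

Lemma sumn_map_pred1_uniq (T : eqType) (s : seq T) (f : T -> nat) x : uniq s ->
  sumn [seq ((y == x) * f y)%N | y <- s] = ((x \in s) * f x)%N.
Proof.
elim: s => //= y s IH /andP[ys us]; rewrite IH // in_cons.
by have [<-|] := eqVneq y x; rewrite /= ?(negbTE ys) ?mul0n ?addn0.
Qed.

Lemma perm_rootsR_prod_XsubC (R : rcfType) (s : seq R)
    (P := \prod_(y <- s) ('X - y%:P)) :
  perm_eq (flatten [seq nseq (mup x P) x | x <- rootsR P]) s.
Proof.
have P0 : P != 0.
  by rewrite prodf_seq_neq0; apply/allP => y _; rewrite polyXsubC_eq0.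
apply/allP => x _; apply/eqP; rewrite count_flatten -map_comp.
rewrite (eq_map (g := fun y => ((y == x) * mup y P)%N)); last first.
  by move=> y /=; rewrite count_nseq.
rewrite sumn_map_pred1_uniq ?uniq_roots //.
have := roots_on_rootsR P0 x; rewrite in_itv /= => <-.
have [Px|NPx] := boolP (root P x); first by rewrite mul1n mu_prod_XsubC.
rewrite mul0n; apply/esym/count_memPn; apply: contra NPx => xs.
by rewrite /P (big_rem x) //= rootM root_XsubC eqxx.
Qed.

Lemma count_gt_nth_sorted (R : realDomainType) (s : seq R) i :
  sorted >=%O s -> (i < size s)%N ->
  (count (fun x => (nth 0 s i < x)%R) s <= i)%N.
Proof.
move=> ss ilt; set t := nth 0 s i.
rewrite -(cat_take_drop i s) count_cat.
have -> : count (fun x => (t < x)%R) (drop i s) = 0%N.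
  apply/eqP; rewrite -leqn0 leqNgt -has_count; apply/negP => /(has_nthP 0).
  move=> [j]; rewrite size_drop nth_drop ltn_subRL => jlt.
  rewrite ltNge => /negP; apply.
  by apply: (sorted_leq_nth ge_trans lexx) => //; rewrite ?inE ?leq_addr.
by rewrite addn0 (leq_trans (count_size _ _)) // size_take ilt.
Qed.

Lemma count_lt_nth_sorted (R : realDomainType) (s : seq R) i :
  sorted >=%O s -> (i < size s)%N ->
  (count (fun x => (x < nth 0 s i)%R) s <= size s - i.+1)%N.
Proof.
move=> ss ilt; set t := nth 0 s i.
rewrite -{1}(cat_take_drop i.+1 s) count_cat.
have -> : count (fun x => (x < t)%R) (take i.+1 s) = 0%N.
  apply/eqP; rewrite -leqn0 leqNgt -has_count; apply/negP => /(has_nthP 0).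
  move=> [j]; rewrite size_takel // => jlt.
  rewrite nth_take // ltNge => /negP; apply.
  by apply: (sorted_leq_nth ge_trans lexx) => //; rewrite inE (leq_trans jlt).
by rewrite add0n (leq_trans (count_size _ _)) // size_drop.
Qed.

Local Open Scope sesquilinear_scope.

Lemma mxrank_sum_le (F : fieldType) m n (I : finType) (P : pred I)
    (B : I -> 'M[F]_(m, n)) :
  (\rank (\sum_(j | P j) B j)%R <= \sum_(j | P j) \rank (B j))%N.
Proof.
apply: (big_ind2 (fun M r => \rank M <= r)%N) => //; first by rewrite mxrank0.
by move=> ? ? ? ? h1 h2; apply: leq_trans (mxrank_add _ _) (leq_add h1 h2).
Qed.

Lemma mxrank_diag_indicator (F : fieldType) n (b : pred 'I_n) :
  (\rank (diag_mx (\row_j ((b j)%:R : F))) <= #|b|)%N.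
Proof.
have -> : diag_mx (\row_j ((b j)%:R : F)) = \sum_(j | b j) delta_mx j j.
  rewrite diag_mx_sum_delta [RHS]big_mkcond; apply: eq_bigr => j _; rewrite mxE.
  by case: (b j); rewrite ?scale1r ?scale0r.
apply: leq_trans (mxrank_sum_le _ _) _.
by rewrite -sum1_card leq_sum // => j _; rewrite mxrank_delta.
Qed.

Lemma capmx_neq0 (F : fieldType) n p q (A : 'M[F]_(p, n)) (B : 'M[F]_(q, n)) :
  (n < \rank A + \rank B)%N -> (A :&: B)%MS != 0.
Proof.
rewrite -mxrank_eq0 -lt0n; have := mxrank_sum_cap A B.
have := rank_leq_col (A + B)%MS; lia.
Qed.

Lemma mxrank_mulmx_inj (F : fieldType) m n p (V : 'M[F]_(m, n)) (T : 'M[F]_(n, p)) :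
  (forall y : 'rV_n, (y <= V)%MS -> y *m T = 0 -> y = 0) ->
  \rank (V *m T) = \rank V.
Proof.
move=> Tinj; apply/mxrank_injP/rowV0P => y.
by rewrite sub_capmx sub_kermx => /andP[yV /eqP]; exact: Tinj.
Qed.

Section RealMatrixForms.
Variable R : realType.
Local Notation C := R[i].
Local Notation toC := (real_complex R).

Lemma conjC_toC (x : R) : (toC x)^* = toC x.
Proof. exact: conjc_real. Qed.

Lemma conjmx_toC m n (A : 'M[R]_(m, n)) : (map_mx toC A) ^t* = map_mx toC A^T.
Proof. by apply/matrixP => i j; rewrite !mxE conjC_toC. Qed.

Lemma Creal_toC (x : C) : x \is Num.real -> x = toC (complex.Re x).
Proof.
case: x => a b /orP[]; rewrite lecE /= => /andP[/eqP h _]; first by rewrite h.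
by rewrite -h.
Qed.

(* The spectral theorem is available over closed fields only, so a real
   symmetric matrix is studied through its Hermitian form on complex vectors. *)
Definition qform N (S : 'M[R]_N) (y : 'rV[C]_N) : C :=
  (y *m map_mx toC S *m y ^t*) 0 0.

Lemma dotmx_sum n (x : 'rV[C]_n) : dotmx x x = \sum_j x 0 j * (x 0 j)^*.
Proof. by rewrite dotmxE !mxE; apply: eq_bigr => j _; rewrite !mxE. Qed.

Section SymmetricSpectrum.
Variables (N : nat) (S : 'M[R]_N).
Hypothesis S_sym : S^T = S.
Local Notation SC := (map_mx toC S).
Local Notation U := (spectralmx SC).
Let ev (j : 'I_N) : R := complex.Re (spectral_diag SC 0 j).
Let coord (y : 'rV[C]_N) := y *m U ^t*.

Lemma hermsymmx_toC : SC \is hermsymmx.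
Proof.
apply/is_hermitianmxP; rewrite expr0 scale1r.
by apply/matrixP => i j; rewrite !mxE conjC_toC -[in LHS]S_sym mxE.
Qed.

Lemma spectral_diag_toC j : spectral_diag SC 0 j = toC (ev j).
Proof.
by have /mxOverP/(_ 0 j)/Creal_toC := hermitian_spectral_diag_real hermsymmx_toC.
Qed.

Lemma spectral_decomp : SC = U ^t* *m diag_mx (spectral_diag SC) *m U.
Proof.
have /orthomx_spectralP E := hermitian_normalmx hermsymmx_toC.
by rewrite -invmx_unitary ?spectral_unitarymx.
Qed.

Lemma char_poly_sym : char_poly S = \prod_(j < N) ('X - (ev j)%:P).
Proof.
apply: (map_poly_inj toC); rewrite map_char_poly rmorph_prod spectral_decomp.
rewrite -invmx_unitary ?spectral_unitarymx // char_poly_conjmx ?spectral_unit //.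
rewrite char_poly_trig ?diag_mx_is_trig //; apply: eq_bigr => j _.
by rewrite /= map_polyXsubC mxE eqxx mulr1n spectral_diag_toC.
Qed.

Lemma real_eigenvalues_sym :
  real_eigenvalues S = sort >=%O [seq ev j | j <- enum 'I_N].
Proof.
apply/perm_sortP; [exact: ge_total | exact: ge_trans | exact: ge_anti |].
have -> : char_poly S = \prod_(x <- [seq ev j | j <- enum 'I_N]) ('X - x%:P).
  by rewrite char_poly_sym big_map big_enum.
exact: perm_rootsR_prod_XsubC.
Qed.

Lemma sorted_real_eigenvalues_sym : sorted >=%O (real_eigenvalues S).
Proof. by rewrite real_eigenvalues_sym; apply: sort_sorted; exact: ge_total. Qed.

Lemma size_real_eigenvalues_sym : size (real_eigenvalues S) = N.
Proof. by rewrite real_eigenvalues_sym size_sort size_map size_enum_ord. Qed.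

Lemma count_real_eigenvalues_sym (P : pred R) :
  count P (real_eigenvalues S) = #|[pred j | P (ev j)]|.
Proof.
rewrite real_eigenvalues_sym (permP (permEl (perm_sort _ _))) count_map.
by rewrite cardE size_filter enumT.
Qed.

Lemma qform_sym_coord y :
  qform S y = \sum_j toC (ev j) * (coord y 0 j * (coord y 0 j)^*).
Proof.
rewrite /qform spectral_decomp !mulmxA -[y *m _ ^t*]/(coord y).
have -> : coord y *m diag_mx (spectral_diag SC) *m U *m y ^t*
          = coord y *m diag_mx (spectral_diag SC) *m (coord y) ^t*.
  by rewrite /coord trmx_mul map_mxM trmxCK !mulmxA.
rewrite mul_mx_diag !mxE; apply: eq_bigr => j _.
by rewrite !mxE spectral_diag_toC -mulrA mulrCA.
Qed.

Lemma dotmx_coord y : dotmx y y = \sum_j coord y 0 j * (coord y 0 j)^*.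
Proof.
have UtU : U ^t* *m U = 1%:M.
  have := spectral_unitarymx SC; rewrite -trmxC_unitary => /unitarymxP.
  by rewrite trmxCK.
rewrite -dotmx_sum !dotmxE /coord trmx_mul map_mxM trmxCK !mulmxA.
by rewrite -[y *m _ *m _]mulmxA UtU mulmx1.
Qed.

Let coord_ker (b : pred 'I_N) := kermx (U ^t* *m diag_mx (\row_j ((b j)%:R : C))).

Lemma coord_ker_coord b y j : (y <= coord_ker b)%MS -> b j -> coord y 0 j = 0.
Proof.
rewrite sub_kermx mulmxA -/(coord y) => /eqP/matrixP/(_ 0 j) + bj.
by rewrite mul_mx_diag !mxE bj mulr1.
Qed.

Lemma mxrank_coord_ker b : (N - #|b| <= \rank (coord_ker b))%N.
Proof.
rewrite mxrank_ker leq_sub2l //.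
exact: leq_trans (mxrankM_maxr _ _) (mxrank_diag_indicator _ b).
Qed.

Lemma qform_coord_ker_le b c y : (forall j, ~~ b j -> ev j <= c) ->
  (y <= coord_ker b)%MS -> qform S y <= toC c * dotmx y y.
Proof.
move=> evc yK; rewrite qform_sym_coord dotmx_coord mulr_sumr; apply: ler_sum => j _.
have [bj|nbj] := boolP (b j); first by rewrite (coord_ker_coord yK) // mul0r !mulr0.
by apply: ler_wpM2r; [exact: mul_conjC_ge0 | rewrite lecR evc].
Qed.

Lemma qform_coord_ker_ge b c y : (forall j, ~~ b j -> c <= ev j) ->
  (y <= coord_ker b)%MS -> toC c * dotmx y y <= qform S y.
Proof.
move=> cev yK; rewrite qform_sym_coord dotmx_coord mulr_sumr; apply: ler_sum => j _.
have [bj|nbj] := boolP (b j); first by rewrite (coord_ker_coord yK) // mul0r !mulr0.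
by apply: ler_wpM2r; [exact: mul_conjC_ge0 | rewrite lecR cev].
Qed.

Lemma courant_fischer_le p i (V : 'M[C]_(p, N)) (c : R) :
  (i < \rank V)%N ->
  (forall y : 'rV_N, (y <= V)%MS -> toC c * dotmx y y <= qform S y) ->
  c <= nth 0 (real_eigenvalues S) i.
Proof.
move=> iV cV; set t := nth 0 (real_eigenvalues S) i.
have iN : (i < N)%N by apply: leq_trans iV (rank_leq_col V).
pose b : pred 'I_N := fun j => t < ev j.
have bi : (#|b| <= i)%N.
  have := @count_gt_nth_sorted _ _ i sorted_real_eigenvalues_sym.
  by rewrite count_real_eigenvalues_sym size_real_eigenvalues_sym; apply.
have /rowV0Pn[y] : (V :&: coord_ker b)%MS != 0.
  apply: capmx_neq0; apply: leq_trans _ (leq_add iV (mxrank_coord_ker b)).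
  by set r := #|b| in bi *; lia.
rewrite sub_capmx => /andP[yV yK] y0.
have := le_trans (cV y yV) (qform_coord_ker_le (c := t) _ yK).
by rewrite ler_pM2r ?dnorm_gt0 // ?lecR; apply => j; rewrite -leNgt.
Qed.

Lemma courant_fischer_witness i : (i < N)%N ->
  exists2 V : 'M[C]_N, (i < \rank V)%N &
  forall y : 'rV_N, (y <= V)%MS ->
    toC (nth 0 (real_eigenvalues S) i) * dotmx y y <= qform S y.
Proof.
move=> iN; set t := nth 0 (real_eigenvalues S) i.
pose b : pred 'I_N := fun j => ev j < t.
have bi : (#|b| <= N - i.+1)%N.
  have := @count_lt_nth_sorted _ _ i sorted_real_eigenvalues_sym.
  by rewrite count_real_eigenvalues_sym size_real_eigenvalues_sym; apply.
exists (coord_ker b).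
  apply: leq_trans _ (mxrank_coord_ker b).
  by set r := #|b| in bi *; lia.
by move=> y; apply: qform_coord_ker_ge => j; rewrite -leNgt.
Qed.

End SymmetricSpectrum.
End RealMatrixForms.

Section GramEigenvalues.
Variable R : realType.
Local Notation C := R[i].
Local Notation toC := (real_complex R).

Definition gram_eig p N (B : 'M[R]_(p, N)) i : R :=
  nth 0 (real_eigenvalues (B^T *m B)) i.

(* A bound on the squared operator norm of T that is at least 1, so that its
   logarithm is a nonnegative constant. *)
Definition frob1 m n (T : 'M[R]_(m, n)) : R := 1 + \sum_i \sum_j T i j ^+ 2.

Lemma gram_sym p N (B : 'M[R]_(p, N)) : (B^T *m B)^T = B^T *m B.
Proof. by rewrite trmx_mul trmxK. Qed.

Lemma qform_gram p N (B : 'M[R]_(p, N)) y :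
  qform (B^T *m B) y = dotmx (y *m map_mx toC B^T) (y *m map_mx toC B^T).
Proof.
rewrite /qform dotmxE [in RHS]trmx_mul [in RHS]map_mxM conjmx_toC trmxK.
by rewrite map_mxM !mulmxA.
Qed.

Lemma gram_eig_ge0 p N (B : 'M[R]_(p, N)) i : (i < N)%N -> 0 <= gram_eig B i.
Proof.
move=> iN; apply: (courant_fischer_le (gram_sym B) (V := 1%:M)).
  by rewrite mxrank1.
by move=> y _; rewrite mul0r qform_gram dnorm_ge0.
Qed.

Lemma frob1_ge1 m n (T : 'M[R]_(m, n)) : 1 <= frob1 T.
Proof.
by rewrite lerDl sumr_ge0 // => i _; rewrite sumr_ge0 // => j _; exact: sqr_ge0.
Qed.

Lemma frob1_tr m n (T : 'M[R]_(m, n)) : frob1 T^T = frob1 T.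
Proof.
rewrite /frob1 exchange_big; congr (1 + _).
by apply: eq_bigr => i _; apply: eq_bigr => j _; rewrite mxE.
Qed.

Lemma dotmx_mulmx_le m n (T : 'M[R]_(m, n)) (y : 'rV[C]_m) :
  dotmx (y *m map_mx toC T) (y *m map_mx toC T) <= toC (frob1 T) * dotmx y y.
Proof.
pose col_j (j : 'I_n) : 'rV[C]_m := \row_i toC (T i j).
have yT j : (y *m map_mx toC T) 0 j = dotmx y (col_j j).
  by rewrite dotmxE !mxE; apply: eq_bigr => i _; rewrite !mxE conjC_toC.
have col_norm j : dotmx (col_j j) (col_j j) = toC (\sum_i T i j ^+ 2).
  rewrite dotmx_sum rmorph_sum; apply: eq_bigr => i _.
  by rewrite !mxE conjC_toC rmorphXn expr2.
apply: le_trans (_ : \sum_j dotmx y y * toC (\sum_i T i j ^+ 2) <= _).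
  rewrite dotmx_sum; apply: ler_sum => j _; rewrite yT -normCK -col_norm.
  exact: (CauchySchwarz _ y (col_j j)).1.
rewrite -mulr_sumr mulrC -rmorph_sum ler_wpM2r ?dnorm_ge0 //.
by rewrite lecR /frob1; apply: ler_wpDl ler01 _; rewrite exchange_big.
Qed.

Lemma gram_eig_mulmx_le p N1 N2 (B : 'M[R]_(p, N2)) (T : 'M[R]_(N2, N1)) i :
  (i < N1)%N -> (i < N2)%N -> gram_eig (B *m T) i <= frob1 T * gram_eig B i.
Proof.
move=> i1 i2; set l := gram_eig (B *m T) i.
have f_gt0 : 0 < frob1 T := lt_le_trans ltr01 (frob1_ge1 T).
have [l_le0|l_gt0] := lerP l 0.
  exact: le_trans l_le0 (mulr_ge0 (ltW f_gt0) (gram_eig_ge0 B i2)).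
have [V iV lV] := courant_fischer_witness (gram_sym (B *m T)) i1.
set T' := map_mx toC T^T.
have qform_BT y : qform ((B *m T)^T *m (B *m T)) y = qform (B^T *m B) (y *m T').
  by rewrite !qform_gram trmx_mul map_mxM mulmxA.
have rVT : \rank (V *m T') = \rank V.
  apply: mxrank_mulmx_inj => y yV yT0; apply/eqP/negPn/negP => y0.
  have ly_gt0 : 0 < toC l * dotmx y y by rewrite mulr_gt0 ?ltcR ?dnorm_gt0.
  have := lV y yV; rewrite qform_BT yT0 /qform !mul0mx mxE.
  by move=> /(lt_le_trans ly_gt0); rewrite ltxx.
rewrite -ler_pdivrMl // mulrC.
apply: (courant_fischer_le (gram_sym B) (V := V *m T')); first by rewrite rVT.
move=> _ /submxP[x ->]; rewrite mulmxA; set u := x *m V.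
rewrite -qform_BT; apply: le_trans (lV u (submxMl _ _)).
apply: le_trans (ler_wpM2l _ (dotmx_mulmx_le _ u)) _.
  by rewrite ler0c divr_ge0 // ltW.
by rewrite frob1_tr mulrA -rmorphM divfK ?gt_eqF.
Qed.

End GramEigenvalues.

Lemma cvg_invSS_ratio (R : realType) :
  ((n.+2%:R)^-1 / (n.+1%:R)^-1 : R) @[n --> \oo] --> (1%R : R).
Proof.
have -> : (fun n => (n.+2%:R)^-1 / (n.+1%:R)^-1 : R) = (fun n => 1 - harmonic n.+1)%R.
  apply: funext => n; rewrite /harmonic /= -[n.+2%:R]natr1 -[n.+1%:R]natr1.
  by field; rewrite !natr1 !pnatr_eq0.
rewrite -[X in _ --> X]subr0; apply: cvgB; first exact: cvg_cst.
by rewrite (cvg_shiftS (@harmonic R)); exact: cvg_harmonic.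
Qed.

Section LogGrowthRates.
Variable R : realType.
Local Open Scope ereal_scope.

Definition edist_le (K : R) (x y : \bar R) :=
  (x = -oo /\ y = -oo) \/ exists a b : R, [/\ x = a%:E, y = b%:E & (`|a - b| <= K)%R].

Lemma edist_le_sym K x y : edist_le K x y -> edist_le K y x.
Proof.
case=> [[-> ->]|[a [b [-> -> ab]]]]; first by left.
by right; exists b, a; rewrite distrC.
Qed.

Lemma ln_le_lnD (x y K : R) : (0 < x)%R -> (0 < y)%R -> (0 < K)%R ->
  (x <= K * y)%R -> (ln x <= ln K + ln y)%R.
Proof. by move=> x0 y0 K0 xKy; rewrite -lnM ?posrE // ler_ln ?posrE ?mulr_gt0. Qed.

Lemma sqrt_le_mul (x y K : R) : (0 <= y)%R -> (1 <= K)%R -> (x <= K * y)%R ->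
  (Num.sqrt x <= K * Num.sqrt y)%R.
Proof.
move=> y0 K1 xKy; have K0 : (0 <= K)%R := le_trans ler01 K1.
rewrite -[K]ger0_norm // -sqrtr_sqr -sqrtrM ?sqr_ge0 // ler_sqrt ?mulr_ge0 ?sqr_ge0 //.
by apply: le_trans xKy _; rewrite ler_wpM2r // expr2 ler_peMl.
Qed.

Lemma edist_le_elog_sqrt (x y K1 K2 : R) : (0 <= x)%R -> (0 <= y)%R ->
  (1 <= K1)%R -> (1 <= K2)%R -> (x <= K1 * y)%R -> (y <= K2 * x)%R ->
  edist_le (ln K1 + ln K2) (elog (Num.sqrt x)) (elog (Num.sqrt y)).
Proof.
move=> x0 y0 K1g K2g xy yx.
have [x_eq0|xn0] := eqVneq x 0%R.
  rewrite x_eq0 mulr0 in yx; have -> : y = 0%R by apply/le_anti; rewrite yx y0.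
  by left; rewrite x_eq0 /elog sqrtr0 eqxx.
have x_gt0 : (0 < x)%R by rewrite lt_def xn0.
have y_gt0 : (0 < y)%R.
  by rewrite lt_def y0 andbT; apply: contraTneq xy => ->; rewrite mulr0 -ltNge.
have sx : (0 < Num.sqrt x)%R by rewrite sqrtr_gt0.
have sy : (0 < Num.sqrt y)%R by rewrite sqrtr_gt0.
right; exists (ln (Num.sqrt x)), (ln (Num.sqrt y)).
rewrite /elog (gt_eqF sx) (gt_eqF sy); split => //.
have K1_gt0 := lt_le_trans ltr01 K1g; have K2_gt0 := lt_le_trans ltr01 K2g.
have := ln_le_lnD sx sy K1_gt0 (sqrt_le_mul y0 K1g xy).
have := ln_le_lnD sy sx K2_gt0 (sqrt_le_mul x0 K2g yx).
have := ln_ge0 K1g; have := ln_ge0 K2g.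
by rewrite ler_norml; move=> *; apply/andP; split; lra.
Qed.

Lemma edist_le_scale (c K : R) x y : (0 <= c)%R -> edist_le K x y ->
  c%:E * x + (- (c * K))%:E <= c%:E * y <= c%:E * x + (c * K)%:E.
Proof.
move=> c0 [[-> ->]|[a [b [-> -> ab]]]].
  have [->|c_gt0] := eqVneq c 0%R; first by rewrite !mul0e mul0r oppr0 adde0 lexx.
  by rewrite gt0_muleNy ?lte_fin ?lt_def ?c_gt0.
rewrite -!EFinM -!EFinD !lee_fin; move: ab; rewrite ler_norml => /andP[? ?].
by apply/andP; split; nra.
Qed.

Lemma cvge_invn_edist (u v : nat -> \bar R) (K : R) (l : \bar R) :
  (forall n, edist_le K (u n) (v n)) ->
  (n%:R^-1)%:E * u n @[n --> \oo] --> l -> (n%:R^-1)%:E * v n @[n --> \oo] --> l.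
Proof.
move=> uv ul.
have cK : (n%:R^-1 * K)%R @[n --> \oo] --> (0%R : R).
  have : (n.+1%:R^-1 * K)%R @[n --> \oo] --> (0%R : R).
    by rewrite -(mul0r K); apply: cvgM; [exact: cvg_harmonic | exact: cvg_cst].
  by rewrite (cvg_shiftS (fun n => n%:R^-1 * K)%R).
have cKe : ((n%:R^-1 * K)%R)%:E @[n --> \oo] --> (0%R : R)%:E.
  by apply: cvg_EFin; [exact: nearW | exact: cK].
have cKNe : (- (n%:R^-1 * K))%R%:E @[n --> \oo] --> (0%R : R)%:E.
  by apply: cvg_EFin; [exact: nearW | rewrite -oppr0; exact: cvgN].
have l0 : l +? (0%R : R)%:E by rewrite fin_num_adde_defl.
apply: (@squeeze_cvge _ _ _ _ (fun n => (n%:R^-1)%:E * u n + (- (n%:R^-1 * K))%:E)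
                              _ (fun n => (n%:R^-1)%:E * u n + (n%:R^-1 * K)%:E)).
- by apply: nearW => n; apply: edist_le_scale.
- by rewrite -[l]adde0; apply: cvgeD.
- by rewrite -[l]adde0; apply: cvgeD.
Qed.

Lemma cvge_rescale (a b : nat -> R) (w : nat -> \bar R) (l : \bar R) :
  (forall n, 0 < a n)%R -> (b n / a n)%R @[n --> \oo] --> (1%R : R) ->
  (a n)%:E * w n @[n --> \oo] --> l -> (b n)%:E * w n @[n --> \oo] --> l.
Proof.
move=> a_gt0 ba1 awl.
have -> : (fun n => (b n)%:E * w n) = (fun n => (b n / a n)%:E * ((a n)%:E * w n)).
  by apply: funext => n; rewrite muleA -EFinM divfK ?gt_eqF.
have l_def : 1%:E *? l.
  by case: l {awl} => [r||]; [exact: mule_def_fin | |]; apply: mule_def_neq0_infty.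
rewrite -[l]mul1e; apply: cvgeM => //.
by apply: cvg_EFin; [exact: nearW | exact: ba1].
Qed.

Lemma cvge_rescaleP (a b : nat -> R) (w : nat -> \bar R) (l : \bar R) :
  (forall n, 0 < a n)%R -> (forall n, 0 < b n)%R ->
  (b n / a n)%R @[n --> \oo] --> (1%R : R) ->
  (a n)%:E * w n @[n --> \oo] --> l <-> (b n)%:E * w n @[n --> \oo] --> l.
Proof.
move=> a_gt0 b_gt0 ba1; split; first exact: cvge_rescale.
apply: cvge_rescale => //.
rewrite -[X in _ --> X]invr1 (_ : (fun n => a n / b n) = (fun n => (b n / a n)^-1))%R.
  exact: cvgV (oner_neq0 R) ba1.
by apply: funext => n; rewrite /= invf_div.
Qed.

Lemma cvge_invn_shift (u : nat -> \bar R) (l : \bar R) :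
  (n%:R^-1)%:E * u n.+1 @[n --> \oo] --> l <-> (n%:R^-1)%:E * u n @[n --> \oo] --> l.
Proof.
rewrite -(cvg_shiftS (fun n => (n%:R^-1)%:E * u n)) /=.
rewrite -(cvg_shiftS (fun n => (n%:R^-1)%:E * u n.+1)) /=.
rewrite -(cvg_shiftS (fun n => (n.+1%:R^-1)%:E * u n.+1)) /=.
by apply: cvge_rescaleP => n; rewrite ?invr_gt0 //; exact: cvg_invSS_ratio.
Qed.

End LogGrowthRates.

Lemma gram_eig_isometry (R : realType) p q N (E : 'M[R]_(p, q)) (B : 'M[R]_(q, N)) i :
  E^T *m E = 1%:M -> gram_eig (E *m B) i = gram_eig B i.
Proof.
by move=> E_iso; rewrite /gram_eig trmx_mul mulmxA -(mulmxA B^T) E_iso mulmx1.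
Qed.

Lemma edist_le_singval_mulmx (R : realType) d k (E : 'M[R]_(d, k)) (Y : 'M[R]_(k, d))
    (Z : 'M[R]_(d, k)) (Q : 'M[R]_k) i :
  E^T *m E = 1%:M -> Y *m Z = 1%:M -> (0 < i <= k)%N -> (k <= d)%N ->
  edist_le (ln (frob1 Y) + ln (frob1 Z))
    (elog (singval (E *m Q *m Y) i)) (elog (singval Q i)).
Proof.
move=> E_iso YZ /andP[i_gt0 ik] kd.
have ik' : (i.-1 < k)%N by rewrite prednK.
have id : (i.-1 < d)%N := leq_trans ik' kd.
have -> : singval (E *m Q *m Y) i = Num.sqrt (gram_eig (Q *m Y) i.-1).
  by rewrite -(gram_eig_isometry _ _ E_iso) mulmxA.
have -> : singval Q i = Num.sqrt (gram_eig Q i.-1) by [].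
apply: edist_le_elog_sqrt; [exact: gram_eig_ge0 | exact: gram_eig_ge0
  | exact: frob1_ge1 | exact: frob1_ge1 | exact: gram_eig_mulmx_le |].
by rewrite -{1}[Q]mulmx1 -YZ mulmxA; exact: gram_eig_mulmx_le.
Qed.

Lemma iter_left_shift m n (w : seqspace m) j : iter n (@left_shift m) w j = w (n + j)%N.
Proof. by elim: n w j => [|n IH] w j //=; rewrite /left_shift IH addnS. Qed.

Section RangeCocycle.
Variables (R : realType) (m d k : nat).
Variables (A : 'I_m.+1 -> 'M[R]_d) (M : 'I_m.+1 -> 'M[R]_(d, k)).
Hypothesis M_iso : forall j, (M j)^T *m M j = 1%:M.
Hypothesis M_range : forall j, ((M j)^T == (A j)^T)%MS.

Lemma range_proj j : M j *m (M j)^T *m A j = A j.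
Proof.
have /andP[_ /submxP[X AX]] := M_range j.
have -> : A j = M j *m X^T by rewrite -[A j]trmxK AX trmx_mul trmxK.
by rewrite -mulmxA (mulmxA (M j)^T) M_iso mul1mx.
Qed.

Let DA (w : seqspace m) := A (w 0%N).
Let DC (w : seqspace m) := (M (w 1%N))^T *m A (w 1%N) *m M (w 0%N).

Lemma cocycle_iter_factor n w : cocycle_iter DA n.+1 w
  = M (w n) *m cocycle_iter DC n w *m ((M (w 0%N))^T *m A (w 0%N)).
Proof.
elim: n => [|n IH]; first by rewrite /= /DA !mulmx1 mulmxA range_proj.
have -> : cocycle_iter DA n.+2 w
          = DA (iter n.+1 (@left_shift m) w) *m cocycle_iter DA n.+1 w by [].
have -> : cocycle_iter DC n.+1 w
          = DC (iter n (@left_shift m) w) *m cocycle_iter DC n w by [].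
by rewrite IH /DA /DC !iter_left_shift !addn0 addn1 !mulmxA range_proj.
Qed.

Lemma range_coord_right_inv j : \rank (A j) = k ->
  exists Z : 'M[R]_(d, k), (M j)^T *m A j *m Z = 1%:M.
Proof.
move=> rA; have /row_fullP[B BY] : row_full ((M j)^T *m A j)^T.
  rewrite /row_full mxrank_tr eqn_leq rank_leq_row /= -{1}rA.
  by rewrite -{1}(range_proj j) -mulmxA mxrankM_maxr.
by exists B^T; rewrite -[_ *m A j]trmxK -trmx_mul BY trmx1.
Qed.

Lemma cvge_lyapunov_iff w i (l : \bar R) :
  (forall j, \rank (A j) = k) -> (k <= d)%N -> (0 < i <= k)%N ->
  ((n%:R^-1)%:E * elog (singval (cocycle_iter DA n w) i))%E @[n --> \oo] --> l <->
  ((n%:R^-1)%:E * elog (singval (cocycle_iter DC n w) i))%E @[n --> \oo] --> l.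
Proof.
move=> rankA kd ik; have [Z YZ] := range_coord_right_inv (rankA (w 0%N)).
have gap n := edist_le_singval_mulmx (cocycle_iter DC n w) (M_iso (w n)) YZ ik kd.
rewrite -cvge_invn_shift; split; apply: cvge_invn_edist => n; rewrite cocycle_iter_factor.
- exact: gap.
- exact: edist_le_sym (gap n).
Qed.

End RangeCocycle.

Theorem proposition4p5 (R : realType) (m d k : nat) (p : 'I_m.+1 -> R)
  (P : probability (Xm m) R)
  (A : 'I_m.+1 -> 'M[R]_d) (M : 'I_m.+1 -> 'M[R]_(d, k)) :
  (1 <= k <= d)%N ->
  positive_prob_vector p -> is_bernoulli p P ->
  (forall j, \rank (A j) = k) ->
  (0 < Theta k A)%E ->
  (forall i, (M i)^T *m M i = 1%:M) ->
  (forall i, ((M i)^T == (A i)^T)%MS) ->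
  let C := fun i j => (M i)^T *m A i *m M j in
  let DA := fun w : seqspace m => A (w 0%N) in
  let DC := fun w : seqspace m => C (w 1%N) (w 0%N) in
  let F := cocycle DA in
  let Ft := cocycle DC in
  let H : seqspace m * 'cV[R]_k -> seqspace m * 'cV[R]_d :=
    fun pr => (left_shift pr.1, M (pr.1 0%N) *m pr.2) in
  (forall pr, F (H pr) = H (Ft pr)) /\
  (forall i, (1 <= i <= k)%N -> forall l : \bar R,
     lyapunov_exponent P DA i l <-> lyapunov_exponent P DC i l).
Proof.
move=> /andP[_ kd] _ _ rankA _ M_iso M_range C DA DC F Ft H; split.
  by case=> w v; rewrite /F /Ft /H /cocycle /= !mulmxA range_proj.
move=> i ik l; have lyap_iff w := cvge_lyapunov_iff M_iso M_range w l rankA kd ik.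
by split; apply: filterS => w; apply (lyap_iff w).
Qed.
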